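(* Assume the setting and the CRAIG recurrence described in the context, and let $k\ge1$ be such that $q_1,\dots,q_k$, $v_1,\dots,v_k$, $t_1,\dots,t_k$, $r_1,\dots,r_k$, $\alpha_1,\dots,\alpha_k$, $\beta_2,\dots,\beta_k$ and $g_k$ are defined. Define $Q_k=[q_1,\dots,q_k]$, $V_k=[v_1,\dots,v_k]$, $T_k=[t_1,\dots,t_k]$, $D_k=[r_1/\alpha_1,\dots,r_k/\alpha_k]$, and let $B_k\in\mathbb{R}^{k\times k}$ be upper bidiagonal with diagonal entries $(B_k)_{ii}=\alpha_i$ and superdiagonal entries $(B_k)_{i,i+1}=\beta_{i+1}$. Then $Q_k=D_kB_k$, $AQ_k=MV_kB_k$, $CQ_k=T_kB_k$, $V_k^TMV_k+D_k^TT_k=I_k$, $Q_k^TNQ_k=I_k$, and $A^TV_k+T_k=NQ_kB_k^T+Ng_ke_k^T$, where $e_k$ is the $k$-th unit vector in $\mathbb{R}^k$. Consequently, with $S=A^TM^{-1}A+C$, $N^{-1}SQ_k=Q_k(B_k^TB_k)+\alpha_k g_ke_k^T$, i.e. the recurrence implicitly performs the Lanczos tridiagonalization of the preconditioned Schur complement.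
   Context: Setting: $M\in\mathbb{R}^{m\times m}$ is symmetric positive definite, $A\in\mathbb{R}^{m\times n}$ ($n\le m$) has full column rank, $C\in\mathbb{R}^{n\times n}$ is symmetric positive semidefinite, $b\in\mathbb{R}^n$ is nonzero, and $N\in\mathbb{R}^{n\times n}$ is symmetric positive definite (the preconditioner). For a symmetric positive definite $G$ write $\|x\|_G=(x^TGx)^{1/2}$. The generalized saddle point system is $Mu+Ap=0$, $A^Tu-Cp=b$, with unique solution $(u_*,p_* )$; $S=A^TM^{-1}A+C$. CRAIG recurrence (exact arithmetic): Initialization: $\beta_1=\|b\|_{N^{-1}}$, $q_1=N^{-1}b/\beta_1$, $r_1=q_1$, $w_1=M^{-1}Aq_1$, $s_1=Cr_1$, $\alpha_1=(w_1^TMw_1+r_1^Ts_1)^{1/2}$, $v_1=w_1/\alpha_1$, $t_1=s_1/\alpha_1$, $\zeta_1=\beta_1/\alpha_1$, $u^{(1)}=\zeta_1v_1$, $p^{(1)}=-(\zeta_1/\alpha_1)r_1$. For $k=1,2,\dots$: $g_k=N^{-1}(A^Tv_k+t_k)-\alpha_kq_k$, $\beta_{k+1}=\|g_k\|_N$; if $\beta_{k+1}=0$ the recurrence stops; otherwise $q_{k+1}=g_k/\beta_{k+1}$, $w_{k+1}=M^{-1}Aq_{k+1}-\beta_{k+1}v_k$, $r_{k+1}=q_{k+1}-(\beta_{k+1}/\alpha_k)r_k$, $s_{k+1}=Cr_{k+1}$, $\alpha_{k+1}=(w_{k+1}^TMw_{k+1}+r_{k+1}^Ts_{k+1})^{1/2}$,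 $v_{k+1}=w_{k+1}/\alpha_{k+1}$, $t_{k+1}=s_{k+1}/\alpha_{k+1}$, $\zeta_{k+1}=-(\beta_{k+1}/\alpha_{k+1})\zeta_k$, $u^{(k+1)}=u^{(k)}+\zeta_{k+1}v_{k+1}$, $p^{(k+1)}=p^{(k)}-(\zeta_{k+1}/\alpha_{k+1})r_{k+1}$. *)

(* Scalars: an arbitrary real closed field R (needed for
   Num.sqrt); the paper's setting is R = the reals, which is an rcfType. *)
From HB Require Import structures.
From mathcomp Require Import all_boot all_order all_algebra.
Set Implicit Arguments. Unset Strict Implicit. Unset Printing Implicit Defensive.
Import Order.TTheory GRing.Theory Num.Theory.
Local Open Scope ring_scope.

Section Craig.
Variable R : rcfType.

Definition qform (p : nat) (G : 'M[R]_p) (x : 'cV[R]_p) : R := (x^T *m G *m x) 0 0.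

Definition normG (p : nat) (G : 'M[R]_p) (x : 'cV[R]_p) : R := Num.sqrt (qform G x).

Definition is_sym (p : nat) (G : 'M[R]_p) : Prop := G^T = G.
Definition is_spd (p : nat) (G : 'M[R]_p) : Prop :=
  is_sym G /\ forall x : 'cV[R]_p, x != 0 -> 0 < qform G x.
Definition is_spsd (p : nat) (G : 'M[R]_p) : Prop :=
  is_sym G /\ forall x : 'cV[R]_p, 0 <= qform G x.

(* State of the CRAIG recurrence at (1-based) index j:
   q_j, r_j, v_j, t_j, alpha_j, beta_j (beta_1 = ||b||_{N^{-1}}). *)
Record craig_state (m n : nat) := CraigState {
  cq : 'cV[R]_n; cr : 'cV[R]_n; cv : 'cV[R]_m; ct : 'cV[R]_n;
  calpha : R; cbeta : R }.

Variables (m n : nat) (M : 'M[R]_m) (A : 'M[R]_(m, n)) (C N : 'M[R]_n)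
          (b : 'cV[R]_n).

Definition craig_init : craig_state m n :=
  let beta1 := normG (invmx N) b in
  let q1 := beta1^-1 *: (invmx N *m b) in
  let r1 := q1 in
  let w1 := invmx M *m A *m q1 in
  let s1 := C *m r1 in
  let alpha1 := Num.sqrt (qform M w1 + (r1^T *m s1) 0 0) in
  CraigState (q1) r1 (alpha1^-1 *: w1) (alpha1^-1 *: s1) alpha1 beta1.

Definition craig_g (s : craig_state m n) : 'cV[R]_n :=
  invmx N *m (A^T *m cv s + ct s) - calpha s *: cq s.

Definition craig_step (s : craig_state m n) : craig_state m n :=
  let g := craig_g s in
  let beta' := normG N g in
  let q' := beta'^-1 *: g in
  let w' := invmx M *m A *m q' - beta' *: cv s in
  let r' := q' - (beta' / calpha s) *: cr s in
  let s' := C *m r' in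
  let alpha' := Num.sqrt (qform M w' + (r'^T *m s') 0 0) in
  CraigState q' r' (alpha'^-1 *: w') (alpha'^-1 *: s') alpha' beta'.

(* craig j = state with (1-based) index j+1 *)
Fixpoint craig (j : nat) : craig_state m n :=
  match j with 0 => craig_init | j'.+1 => craig_step (craig j') end.

Definition alpha_ (j : nat) := calpha (craig j.-1).
Definition beta_ (j : nat) := cbeta (craig j.-1).

Definition Qmat (k : nat) : 'M[R]_(n, k) := \matrix_(i < n, j < k) cq (craig j) i 0.
Definition Vmat (k : nat) : 'M[R]_(m, k) := \matrix_(i < m, j < k) cv (craig j) i 0.
Definition Tmat (k : nat) : 'M[R]_(n, k) := \matrix_(i < n, j < k) ct (craig j) i 0.
Definition Dmat (k : nat) : 'M[R]_(n, k) :=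
  \matrix_(i < n, j < k) (cr (craig j) i 0 / calpha (craig j)).
Definition Bmat (k : nat) : 'M[R]_k :=
  \matrix_(i < k, j < k)
    (if i == j then calpha (craig i)
     else if (j : nat) == i.+1 then cbeta (craig j) else 0).
Definition unit_last (k : nat) : 'cV[R]_k := \col_(j < k) ((j : nat) == k.-1)%:R.

End Craig.

(* The vectors r_j/alpha_j, v_j, t_j and q_j are tied together by three-term
   relations read off the recurrence; in matrix form these are the first
   three identities and the sixth one, with B_k bidiagonal.  The two Gram
   identities are the genuine content: an induction on j shows that the q_i
   are N-orthonormal and that the pairs (v_i, r_i/alpha_i) are orthonormal for
   the form <v,v'>_M + <d,C d'>, each step using that M^{-1}A and
   N^{-1}(A^T . + C .) are adjoint for these forms.  Eliminating V_k and T_k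
   from the matrix identities then gives the Lanczos relation for N^{-1}S. *)
From HB Require Import structures.
From mathcomp Require Import all_boot all_order all_algebra.
From mathcomp Require Import ring.
Import Order.TTheory GRing.Theory Num.Theory.
Set Implicit Arguments. Unset Strict Implicit. Unset Printing Implicit Defensive.
Local Open Scope ring_scope.

Section ColumnMatrices.
Variable R : comPzRingType.

Definition colmx (p k : nat) (f : nat -> 'cV[R]_p) : 'M[R]_(p, k) :=
  \matrix_(i < p, j < k) f j i 0.

Lemma eq_colmx p k (f h : nat -> 'cV[R]_p) :
  (forall j, (j < k)%N -> f j = h j) -> colmx k f = colmx k h.
Proof. by move=> efh; apply/matrixP => i j; rewrite !mxE efh. Qed.

Lemma mulmx_colmx p p' k (P : 'M[R]_(p', p)) (f : nat -> 'cV[R]_p) :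
  P *m colmx k f = colmx k (fun j => P *m f j).
Proof. by apply/matrixP => i j; rewrite !mxE; apply: eq_bigr => l _; rewrite !mxE. Qed.

Lemma colmxD p k (f h : nat -> 'cV[R]_p) :
  colmx k f + colmx k h = colmx k (fun j => f j + h j).
Proof. by apply/matrixP => i j; rewrite !mxE. Qed.

Definition bform p (G : 'M[R]_p) (x y : 'cV[R]_p) : R := (x^T *m G *m y) 0 0.

Lemma gram_colmx p k (G : 'M[R]_p) (f h : nat -> 'cV[R]_p) :
  (colmx k f)^T *m G *m colmx k h = \matrix_(i < k, j < k) bform G (f i) (h j).
Proof.
apply/matrixP => i j; rewrite !mxE /bform mxE; apply: eq_bigr => l _.
by rewrite !mxE; congr (_ * _); apply: eq_bigr => l' _; rewrite !mxE.
Qed.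

Section BilinearForm.
Variables (p : nat) (G : 'M[R]_p).
Implicit Types x y z : 'cV[R]_p.

Lemma bformDl x y z : bform G (x + y) z = bform G x z + bform G y z.
Proof. by rewrite /bform linearD /= !mulmxDl !mxE. Qed.
Lemma bformDr x y z : bform G x (y + z) = bform G x y + bform G x z.
Proof. by rewrite /bform mulmxDr !mxE. Qed.
Lemma bformBr x y z : bform G x (y - z) = bform G x y - bform G x z.
Proof. by rewrite /bform mulmxBr !mxE. Qed.
Lemma bformZl c x y : bform G (c *: x) y = c * bform G x y.
Proof. by rewrite /bform linearZ /= -!scalemxAl !mxE. Qed.
Lemma bformZr c x y : bform G x (c *: y) = c * bform G x y.
Proof. by rewrite /bform -scalemxAr !mxE. Qed.
Lemma bform0l x : bform G 0 x = 0.
Proof. by rewrite /bform trmx0 !mul0mx mxE. Qed.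

Lemma bformC x y : G^T = G -> bform G x y = bform G y x.
Proof.
move=> sG; rewrite /bform.
have -> : (x^T *m G *m y) 0 0 = ((x^T *m G *m y)^T) 0 0 by rewrite [RHS]mxE.
by rewrite !trmx_mul trmxK sG mulmxA.
Qed.
End BilinearForm.

Definition bidiag k (a c : nat -> R) : 'M[R]_k :=
  \matrix_(i < k, j < k) (if i == j then a i else if (j : nat) == i.+1 then c j else 0).

Lemma colmx_mul_bidiag p k (a c : nat -> R) (f : nat -> 'cV[R]_p) :
  colmx k f *m bidiag k a c =
  colmx k (fun j => a j *: f j + (if j is j'.+1 then c j *: f j' else 0)).
Proof.
apply/matrixP => l j; rewrite !mxE (bigD1 j) //= !mxE eqxx [in RHS]mulrC.
congr (_ + _).
have offdiag (i : 'I_k) : i != j -> colmx k f l i * bidiag k a c i j =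
    f i l 0 * (if (j : nat) == i.+1 then c j else 0).
  by move/negbTE=> nij; rewrite !mxE nij.
rewrite (eq_bigr _ offdiag); case: j offdiag => [[|j] ltjk] _ /=.
  by rewrite big1 ?mxE // => i _; rewrite mulr0.
rewrite (bigD1 (Ordinal (ltnW ltjk))) /=; last by rewrite -val_eqE /= neq_ltn ltnSn.
rewrite eqxx big1 ?addr0; first by rewrite !mxE mulrC.
move=> i /andP[_]; rewrite -val_eqE /= => nij.
by rewrite eqSS eq_sym (negbTE nij) mulr0.
Qed.

Lemma colmx_mul_tr_bidiag p k (a c : nat -> R) (f : nat -> 'cV[R]_p) :
  colmx k f *m (bidiag k a c)^T =
  colmx k (fun j => a j *: f j + (if (j.+1 < k)%N then c j.+1 *: f j.+1 else 0)).
Proof.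
apply/matrixP => l j; rewrite !mxE (bigD1 j) //= !mxE eqxx [in RHS]mulrC.
congr (_ + _).
have offdiag (i : 'I_k) : i != j -> colmx k f l i * (bidiag k a c)^T i j =
    f i l 0 * (if (i : nat) == j.+1 then c i else 0).
  by move=> nij; rewrite !mxE eq_sym (negbTE nij).
rewrite (eq_bigr _ offdiag); case: ifP => ltj1k.
  rewrite (bigD1 (Ordinal ltj1k)) /=; last by rewrite -val_eqE /= eq_sym neq_ltn ltnSn.
  rewrite eqxx big1 ?addr0; first by rewrite !mxE mulrC.
  move=> i /andP[_ /negbTE]; rewrite -val_eqE /=.
  by case: eqP => [->|]; rewrite ?eqxx ?mulr0.
rewrite big1 ?mxE // => i _.
by case: eqP => [eij|]; [move: (ltn_ord i); rewrite eij ltj1k | rewrite mulr0].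
Qed.

Definition kronecker_upto (f : nat -> nat -> R) (j : nat) :=
  forall i i', (i <= j)%N -> (i' <= j)%N -> f i i' = (i == i')%:R.

Lemma kronecker_uptoS (f : nat -> nat -> R) j :
  (forall i i', f i i' = f i' i) -> kronecker_upto f j ->
  (forall i, (i <= j)%N -> f i j.+1 = 0) -> f j.+1 j.+1 = 1 ->
  kronecker_upto f j.+1.
Proof.
move=> fC Kj f_new f_diag i i'.
rewrite leq_eqVlt ltnS => /orP[/eqP->|le_ij]; rewrite leq_eqVlt ltnS => /orP[/eqP->|le_i'j].
- by rewrite eqxx.
- by rewrite fC f_new // gtn_eqF.
- by rewrite f_new // ltn_eqF.
- exact: Kj.
Qed.

Lemma kronecker_upto_entry (f : nat -> nat -> R) k (i j : 'I_k) :
  (forall l, (l < k)%N -> kronecker_upto f l) -> f i j = (i == j)%:R.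
Proof.
move=> K; rewrite -val_eqE; apply: (K (maxn i j)).
- by rewrite gtn_max !ltn_ord.
- exact: leq_maxl.
- exact: leq_maxr.
Qed.
End ColumnMatrices.

Section RealClosed.
Variable R : rcfType.

Lemma mul_unit_last p k (g : 'cV[R]_p) :
  g *m (unit_last R k)^T = colmx k (fun j => (j == k.-1)%:R *: g).
Proof. by apply/matrixP => i j; rewrite !mxE big_ord1 !mxE mulrC. Qed.

Lemma unit_last_mul_bidiag k (a c : nat -> R) : (0 < k)%N ->
  (unit_last R k)^T *m bidiag k a c = a k.-1 *: (unit_last R k)^T.
Proof.
move=> k_gt0; have ltk1k : (k.-1 < k)%N by rewrite ltn_predL.
apply/matrixP => i j; rewrite !mxE (bigD1 (Ordinal ltk1k)) //= big1; last first.
  move=> l; rewrite -val_eqE /= !mxE.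
  by case: eqP => [->|]; rewrite ?eqxx ?mul0r.
rewrite !mxE eqxx mul1r addr0 -val_eqE /=.
rewrite eq_sym prednK //; have [_|_] := eqVneq (j : nat) k.-1; first by rewrite mulr1.
by rewrite mulr0 ltn_eqF.
Qed.

Lemma spd_unitmx p (G : 'M[R]_p) : is_spd G -> G \in unitmx.
Proof.
move=> [_ posG]; rewrite unitmxE unitfE; apply/negP => /det0P [v nz_v vG0].
have := posG v^T; rewrite trmx_eq0 nz_v => /(_ isT).
by rewrite /qform trmxK vG0 !mul0mx mxE ltxx.
Qed.

Lemma spd_qform_ge0 p (G : 'M[R]_p) x : is_spd G -> 0 <= qform G x.
Proof.
move=> [_ posG]; have [->|/posG/ltW //] := eqVneq x 0.
by rewrite /qform mulmx0 mxE.
Qed.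

Lemma invr_sqrtr_normalize (X : R) : 0 <= X -> Num.sqrt X != 0 ->
  (Num.sqrt X)^-1 * ((Num.sqrt X)^-1 * X) = 1.
Proof. by move=> X_ge0 nz; rewrite -{3}(sqr_sqrtr X_ge0) expr2 mulKf // mulVf. Qed.
End RealClosed.

Section Craig.
Variables (R : rcfType) (m n : nat) (M : 'M[R]_m) (A : 'M[R]_(m, n)).
Variables (C N : 'M[R]_n) (b : 'cV[R]_n).
Local Notation st j := (craig M A C N b j).
Local Notation qq j := (cq (st j)).
Local Notation rr j := (cr (st j)).
Local Notation vv j := (cv (st j)).
Local Notation al j := (calpha (st j)).
Local Notation be j := (cbeta (st j)).

(* Indices are 0-based here: [st j] is the state with index j+1 of the paper. *)
Definition dvec j := (al j)^-1 *: rr j.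
Definition gvec j := craig_g A N (st j).
Definition wvec j := invmx M *m A *m qq j - (if j is j'.+1 then be j *: vv j' else 0).

Lemma q_succ j : qq j.+1 = (be j.+1)^-1 *: gvec j. Proof. by []. Qed.
Lemma beta_succ j : be j.+1 = normG N (gvec j). Proof. by []. Qed.
Lemma wvec_succ j : wvec j.+1 = invmx M *m A *m qq j.+1 - be j.+1 *: vv j.
Proof. by []. Qed.
Lemma r_succ j : rr j.+1 = qq j.+1 - be j.+1 *: dvec j.
Proof. by rewrite /dvec scalerA. Qed.
Lemma t_dvec j : ct (st j) = C *m dvec j.
Proof. by case: j => [|j] /=; rewrite /dvec scalemxAr. Qed.
Lemma v_wvec j : vv j = (al j)^-1 *: wvec j.
Proof. by case: j => [|j]; rewrite /wvec ?subr0. Qed.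
Lemma alpha_wvec j : al j = Num.sqrt (qform M (wvec j) + bform C (rr j) (rr j)).
Proof. by case: j => [|j]; rewrite /wvec ?subr0 /bform -[_^T *m C *m _]mulmxA. Qed.
Lemma gvecE j : gvec j = invmx N *m (A^T *m vv j + C *m dvec j) - al j *: qq j.
Proof. by rewrite /gvec /craig_g t_dvec. Qed.

Section Orthonormality.
Hypotheses (spdM : is_spd M) (spsdC : is_spsd C) (spdN : is_spd N).
Hypothesis b_neq0 : b != 0.
Variable k : nat.
Hypothesis alpha_neq0 : forall j, (j < k)%N -> al j != 0.
Hypothesis beta_neq0 : forall j, (0 < j < k)%N -> be j != 0.

Let symM : M^T = M := spdM.1.
Let symC : C^T = C := spsdC.1.
Let symN : N^T = N := spdN.1.
Let unitM : M \in unitmx := spd_unitmx spdM.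
Let unitN : N \in unitmx := spd_unitmx spdN.

Lemma alpha_v j : (j < k)%N -> al j *: vv j = wvec j.
Proof. by move=> ltjk; rewrite v_wvec scalerA mulfV ?scale1r ?alpha_neq0. Qed.
Lemma alpha_dvec j : (j < k)%N -> al j *: dvec j = rr j.
Proof. by move=> ltjk; rewrite /dvec scalerA mulfV ?scale1r ?alpha_neq0. Qed.
Lemma beta_q j : (j.+1 < k)%N -> be j.+1 *: qq j.+1 = gvec j.
Proof. by move=> ltjk; rewrite q_succ scalerA mulfV ?scale1r ?beta_neq0. Qed.

Lemma invM_A_q j : (j < k)%N ->
  invmx M *m A *m qq j = al j *: vv j + (if j is j'.+1 then be j *: vv j' else 0).
Proof. by move=> ltjk; rewrite alpha_v // /wvec subrK. Qed.

Lemma q_dvec j : (j < k)%N ->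
  qq j = al j *: dvec j + (if j is j'.+1 then be j *: dvec j' else 0).
Proof.
by move=> ltjk; rewrite alpha_dvec //; case: j ltjk => [|j] _; rewrite ?addr0 // r_succ subrK.
Qed.

Lemma invN_At_v j : (j.+1 < k)%N ->
  invmx N *m (A^T *m vv j + C *m dvec j) = al j *: qq j + be j.+1 *: qq j.+1.
Proof. by move=> ltjk; rewrite beta_q // gvecE [RHS]addrC subrK. Qed.

Lemma bform_adjoint x y z :
  bform M (invmx M *m A *m x) y + bform C x z =
  bform N x (invmx N *m (A^T *m y + C *m z)).
Proof.
rewrite /bform mulmxA -(mulmxA _ N) mulmxV // mulmx1 mulmxDr [in RHS]mxE.
congr (_ + _); last by rewrite mulmxA.
by rewrite !trmx_mul trmx_inv symM !mulmxA -(mulmxA _ (invmx M)) mulVmx // mulmx1.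
Qed.

Definition q_gram i j := bform N (qq i) (qq j).
Definition vd_gram i j := bform M (vv i) (vv j) + bform C (dvec i) (dvec j).

Lemma q_gramC i j : q_gram i j = q_gram j i.
Proof. exact: bformC. Qed.
Lemma vd_gramC i j : vd_gram i j = vd_gram j i.
Proof. by rewrite /vd_gram bformC // [bform C _ _]bformC. Qed.

Lemma q_gram_diag j : (j < k)%N -> q_gram j j = 1.
Proof.
rewrite /q_gram; case: j => [|j] ltjk.
  rewrite /= bformZl bformZr; set y := invmx N *m b.
  have qformE : qform (invmx N) b = bform N y y.
    by rewrite /bform /y /qform trmx_mul trmx_inv symN -!mulmxA (mulmxA N) mulmxV // mul1mx.
  have y_neq0 : y != 0.
    by apply: contra b_neq0 => /eqP y0; rewrite -(mulKVmx unitN b) -/y y0 mulmx0.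
  rewrite /normG qformE invr_sqrtr_normalize //; first exact: spd_qform_ge0.
  by rewrite sqrtr_eq0 -ltNge; case: spdN => _ ->.
rewrite q_succ bformZl bformZr invr_sqrtr_normalize //; first exact: spd_qform_ge0.
by rewrite -[Num.sqrt _]/(normG N (gvec j)) -beta_succ beta_neq0.
Qed.

Lemma vd_gram_diag j : (j < k)%N -> vd_gram j j = 1.
Proof.
move=> ltjk; rewrite /vd_gram v_wvec /dvec !bformZl !bformZr -!mulrDr.
have := alpha_neq0 ltjk; rewrite alpha_wvec => alpha_nz.
rewrite invr_sqrtr_normalize //.
by apply: addr_ge0; [exact: spd_qform_ge0 | exact: spsdC.2].
Qed.

Lemma q_invN_At_v i j : (i < k)%N ->
  bform N (qq i) (invmx N *m (A^T *m vv j + C *m dvec j)) =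
  al i * vd_gram i j + (if i is i'.+1 then be i * vd_gram i' j else 0).
Proof.
move=> ltik; rewrite -bform_adjoint invM_A_q // [in bform C _ _]q_dvec //.
by case: i ltik => [|i] _; rewrite /vd_gram !bformDl ?bform0l !bformZl; ring.
Qed.

Lemma q_gram_succ j : (j.+1 < k)%N ->
  kronecker_upto q_gram j -> kronecker_upto vd_gram j ->
  forall i, (i <= j)%N -> q_gram i j.+1 = 0.
Proof.
move=> ltjk Kq Kvd i le_ij; have ltik : (i < k)%N := leq_ltn_trans le_ij (ltnW ltjk).
have beta_nz : be j.+1 != 0 by rewrite beta_neq0.
(* beta_{j+1} q_gram i (j+1) = <q_i, g_j>_N, which by adjointness is
   alpha_i vd_gram i j + beta_i vd_gram (i-1) j - alpha_j q_gram i j. *)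
apply: (mulfI beta_nz); rewrite mulr0 /q_gram -bformZr beta_q // gvecE bformBr.
rewrite bformZr q_invN_At_v // Kvd // -/(q_gram i j) Kq //.
have -> : (if i is i'.+1 then be i * vd_gram i' j else 0) = 0.
  by case: i le_ij {ltik} => [|i] // le_ij; rewrite Kvd ?ltn_eqF ?mulr0 // ltnW.
by rewrite addr0; have [->|_] := eqVneq i j; rewrite ?mulr0 subrr.
Qed.

Lemma vd_gram_succ j : (j.+1 < k)%N ->
  kronecker_upto q_gram j.+1 -> kronecker_upto vd_gram j ->
  forall i, (i <= j)%N -> vd_gram i j.+1 = 0.
Proof.
move=> ltjk Kq Kvd i le_ij.
have ltik : (i.+1 < k)%N := leq_ltn_trans (le_ij : (i.+1 <= j.+1)%N) ltjk.
(* By adjointness alpha_{j+1} vd_gram i (j+1) is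
   <q_{j+1}, alpha_i q_i + beta_{i+1} q_{i+1}>_N - beta_{j+1} vd_gram i j. *)
apply: (mulfI (alpha_neq0 ltjk)); rewrite mulr0 /vd_gram mulrDr -!bformZr.
rewrite alpha_v // alpha_dvec // wvec_succ r_succ !bformBr.
rewrite (bformZr M _ (vv i) (vv j)) (bformZr C _ (dvec i) (dvec j)).
rewrite addrACA -opprD -mulrDr -/(vd_gram i j) Kvd //.
rewrite bformC // [bform C _ _]bformC // bform_adjoint invN_At_v //.
rewrite bformDr (bformZr N (al i)) (bformZr N (be i.+1)).
rewrite -/(q_gram j.+1 i) -/(q_gram j.+1 i.+1) !Kq ?leqnn ?(leqW le_ij) //.
rewrite gtn_eqF ?ltnS // mulr0 add0r eqSS eq_sym.
by have [->|_] := eqVneq i j; rewrite ?mulr0 subrr.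
Qed.

Lemma craig_orthonormal j : (j < k)%N ->
  kronecker_upto q_gram j /\ kronecker_upto vd_gram j.
Proof.
elim: j => [|j IH] ltjk.
  by split=> i i'; rewrite !leqn0 => /eqP-> /eqP->; rewrite ?q_gram_diag ?vd_gram_diag.
have [Kq Kvd] := IH (ltnW ltjk).
have Kq' : kronecker_upto q_gram j.+1.
  exact: kronecker_uptoS q_gramC Kq (q_gram_succ ltjk Kq Kvd) (q_gram_diag ltjk).
split=> //.
exact: kronecker_uptoS vd_gramC Kvd (vd_gram_succ ltjk Kq' Kvd) (vd_gram_diag ltjk).
Qed.

Lemma QmatE : Qmat M A C N b k = colmx k (fun j => qq j). Proof. by []. Qed.
Lemma VmatE : Vmat M A C N b k = colmx k (fun j => vv j). Proof. by []. Qed.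
Lemma DmatE : Dmat M A C N b k = colmx k dvec.
Proof. by apply/matrixP => i j; rewrite !mxE mulrC. Qed.
Lemma TmatE : Tmat M A C N b k = colmx k (fun j => C *m dvec j).
Proof. by apply/matrixP => i j; rewrite [LHS]mxE [RHS]mxE t_dvec. Qed.
Lemma BmatE : Bmat M A C N b k = bidiag k (fun j => al j) (fun j => be j).
Proof. by []. Qed.

Lemma Qmat_DB : Qmat M A C N b k = Dmat M A C N b k *m Bmat M A C N b k.
Proof.
rewrite QmatE DmatE BmatE colmx_mul_bidiag; apply: eq_colmx => j ltjk.
by rewrite q_dvec.
Qed.

Lemma AQmat_MVB : A *m Qmat M A C N b k = M *m Vmat M A C N b k *m Bmat M A C N b k.
Proof.
rewrite QmatE VmatE BmatE !mulmx_colmx colmx_mul_bidiag; apply: eq_colmx => j ltjk.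
have -> : A *m qq j = M *m (invmx M *m A *m qq j) by rewrite -mulmxA mulKVmx.
rewrite invM_A_q // mulmxDr -scalemxAr.
by case: j ltjk => [|j] _; rewrite ?mulmx0 ?scalemxAr.
Qed.

Lemma CQmat_TB : C *m Qmat M A C N b k = Tmat M A C N b k *m Bmat M A C N b k.
Proof.
rewrite QmatE TmatE BmatE mulmx_colmx colmx_mul_bidiag; apply: eq_colmx => j ltjk.
rewrite {1}q_dvec // mulmxDr -scalemxAr.
by case: j ltjk => [|j] _; rewrite ?mulmx0 ?scalemxAr.
Qed.

Lemma gram_VD : (Vmat M A C N b k)^T *m M *m Vmat M A C N b k +
  (Dmat M A C N b k)^T *m Tmat M A C N b k = 1%:M.
Proof.
rewrite VmatE DmatE TmatE -mulmx_colmx mulmxA !gram_colmx.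
apply/matrixP => i j; rewrite !mxE.
rewrite -/(vd_gram i j); apply: kronecker_upto_entry => l.
by case/craig_orthonormal.
Qed.

Lemma gram_Q : (Qmat M A C N b k)^T *m N *m Qmat M A C N b k = 1%:M.
Proof.
rewrite QmatE gram_colmx; apply/matrixP => i j; rewrite !mxE.
rewrite -/(q_gram i j); apply: kronecker_upto_entry => l.
by case/craig_orthonormal.
Qed.

Lemma AtV_add_T : A^T *m Vmat M A C N b k + Tmat M A C N b k =
  N *m Qmat M A C N b k *m (Bmat M A C N b k)^T +
  N *m gvec k.-1 *m (unit_last R k)^T.
Proof.
rewrite VmatE TmatE QmatE BmatE !mulmx_colmx colmx_mul_tr_bidiag.
rewrite mul_unit_last !colmxD; apply: eq_colmx => j ltjk.
have -> : A^T *m vv j + C *m dvec j = N *m gvec j + al j *: (N *m qq j).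
  by rewrite gvecE mulmxBr mulKVmx // scalemxAr subrK.
case: ifP => ltj1k.
  by rewrite -beta_q // ltn_eqF ?ltn_predRL // scale0r addr0 -scalemxAr addrC.
have -> : k = j.+1 by apply/eqP; rewrite eqn_leq leqNgt ltj1k ltjk.
by rewrite eqxx scale1r addr0 addrC.
Qed.

Lemma lanczos_relation : (0 < k)%N ->
  invmx N *m (A^T *m invmx M *m A + C) *m Qmat M A C N b k =
  Qmat M A C N b k *m ((Bmat M A C N b k)^T *m Bmat M A C N b k) +
  al k.-1 *: (gvec k.-1 *m (unit_last R k)^T).
Proof.
move=> k_gt0.
have SQ : (A^T *m invmx M *m A + C) *m Qmat M A C N b k =
    (A^T *m Vmat M A C N b k + Tmat M A C N b k) *m Bmat M A C N b k.
  by rewrite mulmxDl CQmat_TB -!mulmxA AQmat_MVB !mulmxA mulmxKV // mulmxDl.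
rewrite -mulmxA SQ AtV_add_T mulmxDl mulmxDr -!mulmxA !mulKmx // BmatE.
by rewrite unit_last_mul_bidiag // -scalemxAr.
Qed.
End Orthonormality.
End Craig.

Theorem mainTheorem2 (R : rcfType) (m n : nat) (M : 'M[R]_m) (A : 'M[R]_(m, n))
    (C N : 'M[R]_n) (b : 'cV[R]_n) (k : nat) :
  (n <= m)%N ->
  is_spd M -> \rank A = n -> is_spsd C -> b != 0 -> is_spd N ->
  (0 < k)%N ->
  (* the recurrence is defined up to index k: alpha_1..alpha_k nonzero
     (so divisions are legitimate) and beta_2..beta_k nonzero (no stop) *)
  (forall j, (1 <= j <= k)%N -> alpha_ M A C N b j != 0) ->
  (forall j, (2 <= j <= k)%N -> beta_ M A C N b j != 0) ->
  let Q := Qmat M A C N b k in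
  let V := Vmat M A C N b k in
  let T := Tmat M A C N b k in
  let D := Dmat M A C N b k in
  let B := Bmat M A C N b k in
  let gk := craig_g A N (craig M A C N b k.-1) in
  let ek := unit_last R k in
  let S := A^T *m invmx M *m A + C in
  Q = D *m B /\
  A *m Q = M *m V *m B /\
  C *m Q = T *m B /\
  V^T *m M *m V + D^T *m T = 1%:M /\
  Q^T *m N *m Q = 1%:M /\
  A^T *m V + T = N *m Q *m B^T + N *m gk *m ek^T /\
  invmx N *m S *m Q = Q *m (B^T *m B) + alpha_ M A C N b k *: (gk *m ek^T).
Proof.
move=> _ spdM _ spsdC b_neq0 spdN k_gt0 alpha_neq0 beta_neq0 /=.
have alpha_neq0' j : (j < k)%N -> calpha (craig M A C N b j) != 0.
  by move=> ltjk; apply: (alpha_neq0 j.+1).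
have beta_neq0' j : (0 < j < k)%N -> cbeta (craig M A C N b j) != 0.
  by case/andP=> j_gt0 ltjk; apply: (beta_neq0 j.+1); rewrite ltnS j_gt0.
split; first exact: Qmat_DB.
split; first exact: AQmat_MVB.
split; first exact: CQmat_TB.
split; first exact: gram_VD.
split; first exact: gram_Q.
split; first exact: AtV_add_T.
exact: lanczos_relation.
Qed.
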